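(* Let $H$ be a finite dimensional Hopf algebra over a field $\mathbb{K}$ with coproduct $\Delta(x)=x_{(1)}\otimes x_{(2)}$ (Sweedler notation), counit $\epsilon$ and antipode $S$. Let $\mu_R\in H^*$ be a right integral and $e_R\in H$ a right cointegral, normalized so that $\mu_R(e_R)=1$. Put $a=\mu_R(e_{R(2)})\,e_{R(1)}\in H$, $\alpha=\mu_R(\,\cdot\,e_R)\in H^*$ (i.e. $\alpha(x)=\mu_R(xe_R)$), $q=\alpha(a)\in\mathbb{K}$, $e_L=S^{-1}(e_R)$ and $\mu_L=\mu_R\circ S$. Then $$S(e_R)=q\,e_L\qquad\text{and}\qquad \mu_L(e_R)=q.$$
   Context: A right integral of $H$ is an element $\mu_R\in H^*$ with $\mu_R(x_{(1)})x_{(2)}=\mu_R(x)1_H$ for all $x\in H$; a right cointegral is an element $e_R\in H$ with $e_Rx=\epsilon(x)e_R$ for all $x\in H$. For a finite dimensional Hopf algebra nonzero such elements exist, are unique up to scalars, and can be chosen with $\mu_R(e_R)=1$; the antipode is invertible. *)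

(* A finite dimensional Hopf algebra over a field K, of
   dimension n, presented by structure constants in a fixed basis e_0..e_{n-1}.
   Elements of H are row vectors 'rV[K]_n; elements of H (x) H are n x n
   matrices (entry (j,k) = coefficient of e_j (x) e_k); elements of H^* are
   column vectors 'cV[K]_n (entry i = value on e_i). *)
From HB Require Import structures.
From mathcomp Require Import all_boot all_order all_algebra.
Set Implicit Arguments. Unset Strict Implicit. Unset Printing Implicit Defensive.
Import GRing.Theory.
Local Open Scope ring_scope.

Record hopf_data (K : fieldType) (n : nat) := HopfData {
  hm : 'I_n -> 'I_n -> 'rV[K]_n;   (* e_i * e_j *)
  hu : 'rV[K]_n;
  hD : 'I_n -> 'M[K]_n;            (* coproduct Delta(e_i) in H (x) H *)
  heps : 'I_n -> K;
  hS : 'M[K]_n                     (* antipode: S x = x *m hS *)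
}.

Definition bvec (K : fieldType) (n : nat) (i : 'I_n) : 'rV[K]_n := delta_mx 0 i.

Definition hmul K n (A : hopf_data K n) (x y : 'rV[K]_n) : 'rV[K]_n :=
  \sum_i \sum_j (x 0 i * y 0 j) *: hm A i j.
Definition hcomul K n (A : hopf_data K n) (x : 'rV[K]_n) : 'M[K]_n :=
  \sum_i x 0 i *: hD A i.
Definition hcounit K n (A : hopf_data K n) (x : 'rV[K]_n) : K :=
  \sum_i x 0 i * heps A i.
Definition hanti K n (A : hopf_data K n) (x : 'rV[K]_n) : 'rV[K]_n := x *m hS A.
(* S^{-1} (the antipode of a finite dimensional Hopf algebra is invertible) *)
Definition hantiinv K n (A : hopf_data K n) (x : 'rV[K]_n) : 'rV[K]_n :=
  x *m invmx (hS A).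

Definition tens (K : fieldType) n (x y : 'rV[K]_n) : 'M[K]_n := x^T *m y.

Definition tmul K n (A : hopf_data K n) (P Q : 'M[K]_n) : 'M[K]_n :=
  \sum_i \sum_j \sum_k \sum_l (P i j * Q k l) *:
     tens (hmul A (bvec K i) (bvec K k)) (hmul A (bvec K j) (bvec K l)).

Definition ev (K : fieldType) n (phi : 'cV[K]_n) (x : 'rV[K]_n) : K := (x *m phi) 0 0.

Definition contr_l (K : fieldType) n (phi : 'cV[K]_n) (P : 'M[K]_n) : 'rV[K]_n :=
  \sum_j \sum_k (P j k * ev phi (bvec K j)) *: bvec K k.
Definition contr_r (K : fieldType) n (phi : 'cV[K]_n) (P : 'M[K]_n) : 'rV[K]_n :=
  \sum_j \sum_k (P j k * ev phi (bvec K k)) *: bvec K j.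

Definition is_hopf K n (A : hopf_data K n) : Prop :=
  (forall x y z, hmul A (hmul A x y) z = hmul A x (hmul A y z)) /\
      (forall x, hmul A (hu A) x = x /\ hmul A x (hu A) = x) /\
      (* coassociativity, coefficientwise on e_i (x) e_j (x) e_k *)
      (forall x i j k,
         \sum_a hcomul A x a k * hcomul A (bvec K a) i j
         = \sum_b hcomul A x i b * hcomul A (bvec K b) j k) /\
      (forall x,
         \sum_j \sum_k (hcomul A x j k * hcounit A (bvec K j)) *: bvec K k = x
      /\ \sum_j \sum_k (hcomul A x j k * hcounit A (bvec K k)) *: bvec K j = x) /\
      ((forall x y, hcomul A (hmul A x y) = tmul A (hcomul A x) (hcomul A y))
      /\ hcomul A (hu A) = tens (hu A) (hu A)) /\
      ((forall x y, hcounit A (hmul A x y) = hcounit A x * hcounit A y)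
      /\ hcounit A (hu A) = 1) /\
      (forall x,
         \sum_j \sum_k hcomul A x j k *: hmul A (hanti A (bvec K j)) (bvec K k)
           = hcounit A x *: hu A
      /\ \sum_j \sum_k hcomul A x j k *: hmul A (bvec K j) (hanti A (bvec K k))
           = hcounit A x *: hu A).

Definition is_right_integral K n (A : hopf_data K n) (mu : 'cV[K]_n) : Prop :=
  forall x, contr_l mu (hcomul A x) = ev mu x *: hu A.

Definition is_right_cointegral K n (A : hopf_data K n) (e : 'rV[K]_n) : Prop :=
  forall x, hmul A e x = hcounit A x *: e.

From mathcomp Require Import all_boot all_order all_algebra.
Set Implicit Arguments. Unset Strict Implicit. Unset Printing Implicit Defensive.
Import GRing.Theory.
Local Open Scope ring_scope.

(* The proof then follows the classical route:
   - the integral identity mu(x_(1) y) x_(2) = mu(x y_(1)) S(y_(2)) makes mu a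
     nondegenerate form; hence S is bijective and right cointegrals are the
     multiples of e;
   - x e = alpha(x) e, so alpha is a character, and S(y) = mu(e_(1) y) e_(2);
     in particular S(e) = alpha(e_(1)) e_(2);
   - hitting with a character chi is multiplicative and is inverted by hitting
     with chi o S; with chi = alpha this shows that S(e) is a left cointegral;
   - therefore S(S(e)) = mu(S(e)) e and mu(S(e)) = q; applying S^-1 gives the
     theorem. *)

Section Coordinates.
Variables (K : fieldType) (n : nat).
Local Notation bv := (bvec K).

Lemma bvecE (i j : 'I_n) : bv i 0 j = (i == j)%:R.
Proof. by rewrite /bvec mxE eqxx eq_sym. Qed.

Lemma sum_delta (W : lmodType K) (i0 : 'I_n) (F : 'I_n -> W) :
  \sum_i (i0 == i)%:R *: F i = F i0.
Proof.
rewrite (bigD1 i0) //= eqxx scale1r big1 ?addr0 // => i /negbTE.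
by rewrite eq_sym => ->; rewrite scale0r.
Qed.

Lemma rowE (x : 'rV[K]_n) : x = \sum_i x 0 i *: bv i.
Proof. exact: row_sum_delta. Qed.

Lemma coord_sum (c : 'I_n -> K) k : (\sum_i c i *: bv i) 0 k = c k.
Proof.
rewrite summxE; under eq_bigr do rewrite mxE bvecE mulrC eq_sym.
exact: (sum_delta (W := K^o)).
Qed.

Definition coord_linear (W : lmodType K) (f : 'rV[K]_n -> W) :=
  forall x, f x = \sum_i x 0 i *: f (bv i).

Section CoordLinear.
Variables (W : lmodType K) (f : 'rV[K]_n -> W).
Hypothesis f_lin : coord_linear f.

Lemma lin_sum (I : Type) (r : seq I) (P : pred I) (F : I -> 'rV[K]_n) :
  f (\sum_(j <- r | P j) F j) = \sum_(j <- r | P j) f (F j).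
Proof.
rewrite f_lin; under eq_bigr do rewrite summxE scaler_suml.
by rewrite exchange_big; apply: eq_bigr => j _; rewrite [RHS]f_lin.
Qed.

Lemma lin_scale a x : f (a *: x) = a *: f x.
Proof.
rewrite f_lin [in RHS]f_lin scaler_sumr; apply: eq_bigr => i _.
by rewrite mxE scalerA.
Qed.

Lemma lin_add x y : f (x + y) = f x + f y.
Proof.
rewrite f_lin [f x]f_lin [f y]f_lin -big_split; apply: eq_bigr => i _.
by rewrite mxE scalerDl.
Qed.

End CoordLinear.

Lemma lin_comp (W : lmodType K) (g : 'rV[K]_n -> W) (f : 'rV[K]_n -> 'rV[K]_n) :
  coord_linear g -> coord_linear f -> coord_linear (g \o f).
Proof.
move=> g_lin f_lin x /=; rewrite f_lin (lin_sum g_lin).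
by apply: eq_bigr => i _; rewrite (lin_scale g_lin).
Qed.

Lemma scale_linear c : coord_linear (fun v : 'rV[K]_n => c *: v).
Proof.
move=> v; rewrite {1}(rowE v) scaler_sumr.
by apply: eq_bigr => i _; rewrite !scalerA mulrC.
Qed.

Lemma scale_by_linear (f : 'rV[K]_n -> K^o) (v : 'rV[K]_n) :
  coord_linear f -> coord_linear (fun u => f u *: v).
Proof.
move=> f_lin u; rewrite [f u]f_lin scaler_suml.
by apply: eq_bigr => i _; rewrite scalerA.
Qed.

Lemma ev_bvec (phi : 'cV[K]_n) i : ev phi (bv i) = phi i 0.
Proof.
rewrite /ev mxE; under eq_bigr do rewrite bvecE.
exact: (sum_delta (W := K^o)).
Qed.

Lemma ev_linear (phi : 'cV[K]_n) : coord_linear (ev phi : _ -> K^o).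
Proof.
move=> x; rewrite /ev {1}(rowE x) mulmx_suml summxE; apply: eq_bigr => i _.
by rewrite -scalemxAl mxE.
Qed.

Lemma ev_col (f : 'rV[K]_n -> K^o) z :
  coord_linear f -> ev (\col_i (f (bv i) : K)) z = f z.
Proof.
move=> f_lin; rewrite (ev_linear _ z) [RHS]f_lin.
by apply: eq_bigr => i _; rewrite ev_bvec mxE.
Qed.

Lemma ev_sum (phi : 'cV[K]_n) (I : Type) (r : seq I) (P : pred I) F :
  ev phi (\sum_(j <- r | P j) F j) = \sum_(j <- r | P j) ev phi (F j).
Proof. exact: (lin_sum (ev_linear phi)). Qed.

Lemma evZ (phi : 'cV[K]_n) a x : ev phi (a *: x) = a * ev phi x.
Proof. exact: (lin_scale (ev_linear phi)). Qed.

Lemma evD (phi : 'cV[K]_n) x y : ev phi (x + y) = ev phi x + ev phi y.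
Proof. exact: (lin_add (ev_linear phi)). Qed.

End Coordinates.

Section HopfLinear.
Variables (K : fieldType) (n : nat) (A : hopf_data K n).
Local Notation bv := (bvec K).
Local Notation vect := 'rV[K]_n.

Lemma hmul_bl i (y : vect) : hmul A (bv i) y = \sum_j y 0 j *: hm A i j.
Proof.
rewrite /hmul; under eq_bigr => i' _ do under eq_bigr => j _ do
  rewrite bvecE -scalerA.
by under eq_bigr do rewrite -scaler_sumr; rewrite sum_delta.
Qed.

Lemma hmul_br (x : vect) j : hmul A x (bv j) = \sum_i x 0 i *: hm A i j.
Proof.
rewrite /hmul; apply: eq_bigr => i _.
by under eq_bigr do rewrite bvecE mulrC -scalerA; rewrite sum_delta.
Qed.

Lemma hcomul_b i : hcomul A (bv i) = hD A i.
Proof. by rewrite /hcomul; under eq_bigr do rewrite bvecE; rewrite sum_delta. Qed.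

Lemma hcounit_b i : hcounit A (bv i) = heps A i.
Proof.
rewrite /hcounit; under eq_bigr do rewrite bvecE.
exact: (sum_delta (W := K^o)).
Qed.

Lemma hmull_linear (y : vect) : coord_linear (hmul A ^~ y).
Proof.
move=> x /=; under [RHS]eq_bigr do rewrite hmul_bl scaler_sumr.
by apply: eq_bigr => i _; apply: eq_bigr => j _; rewrite scalerA.
Qed.

Lemma hmulr_linear (x : vect) : coord_linear (hmul A x).
Proof.
move=> y; under [RHS]eq_bigr do rewrite hmul_br scaler_sumr.
rewrite /hmul exchange_big; apply: eq_bigr => i _; apply: eq_bigr => j _.
by rewrite scalerA mulrC.
Qed.

Lemma hcomul_linear : coord_linear (hcomul A).
Proof. by move=> x; under [RHS]eq_bigr do rewrite hcomul_b. Qed.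

Lemma hcounit_linear : coord_linear (hcounit A : _ -> K^o).
Proof. by move=> x; under [RHS]eq_bigr do rewrite hcounit_b. Qed.

Lemma hanti_linear : coord_linear (hanti A).
Proof.
move=> x; rewrite /hanti {1}(rowE x) mulmx_suml.
by apply: eq_bigr => i _; rewrite scalemxAl.
Qed.

Lemma hmul_suml y (I : Type) (r : seq I) (P : pred I) F :
  hmul A (\sum_(j <- r | P j) F j) y = \sum_(j <- r | P j) hmul A (F j) y.
Proof. exact: (lin_sum (hmull_linear y)). Qed.

Lemma hmulZl a x y : hmul A (a *: x) y = a *: hmul A x y.
Proof. exact: (lin_scale (hmull_linear y)). Qed.

Lemma hmulZr a x y : hmul A x (a *: y) = a *: hmul A x y.
Proof. exact: (lin_scale (hmulr_linear x)). Qed.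

Lemma hmulDl x z y : hmul A (x + z) y = hmul A x y + hmul A z y.
Proof. exact: (lin_add (hmull_linear y)). Qed.

Lemma hmulDr x y z : hmul A x (y + z) = hmul A x y + hmul A x z.
Proof. exact: (lin_add (hmulr_linear x)). Qed.

Lemma hcounitD x y : hcounit A (x + y) = hcounit A x + hcounit A y.
Proof. exact: (lin_add hcounit_linear). Qed.

Lemma hcounitZ a x : hcounit A (a *: x) = a * hcounit A x.
Proof. exact: (lin_scale hcounit_linear). Qed.

Lemma hantiD x y : hanti A (x + y) = hanti A x + hanti A y.
Proof. exact: (lin_add hanti_linear). Qed.

Lemma hantiZ a x : hanti A (a *: x) = a *: hanti A x.
Proof. exact: (lin_scale hanti_linear). Qed.

Lemma hantiK : hS A \in unitmx -> cancel (hanti A) (hantiinv A).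
Proof. exact: mulmxK. Qed.

End HopfLinear.

Section Sweedler.
Variables (K : fieldType) (n : nat) (A : hopf_data K n).
Local Notation bv := (bvec K).
Local Notation vect := 'rV[K]_n.

Definition tsum (W : lmodType K) (F : vect -> vect -> W) (M : 'M[K]_n) : W :=
  \sum_j \sum_k M j k *: F (bv j) (bv k).

(* Sweedler notation: [sweedler A F x] stands for F x_(1) x_(2). *)
Definition sweedler (W : lmodType K) (F : vect -> vect -> W) (x : vect) : W :=
  tsum F (hcomul A x).

Local Notation sw := sweedler.

Lemma eq_sweedler (W : lmodType K) (F G : vect -> vect -> W) x :
  (forall u v, F u v = G u v) -> sw F x = sw G x.
Proof. by move=> FG; apply: eq_bigr => j _; apply: eq_bigr => k _; rewrite FG. Qed.

Lemma sweedler0 (W : lmodType K) x : sw (fun _ _ => 0 : W) x = 0.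
Proof.
by rewrite /sweedler /tsum big1 // => j _; rewrite big1 // => k _; rewrite scaler0.
Qed.

Lemma tsum_sum (W : lmodType K) (F : vect -> vect -> W) (I : Type) (r : seq I)
    (P : pred I) (M : I -> 'M[K]_n) :
  tsum F (\sum_(i <- r | P i) M i) = \sum_(i <- r | P i) tsum F (M i).
Proof.
rewrite /tsum; under eq_bigr do under eq_bigr do rewrite summxE scaler_suml.
by under eq_bigr do rewrite exchange_big; rewrite exchange_big.
Qed.

Lemma tsumZ (W : lmodType K) (F : vect -> vect -> W) a M :
  tsum F (a *: M) = a *: tsum F M.
Proof.
rewrite /tsum scaler_sumr; apply: eq_bigr => j _; rewrite scaler_sumr.
by apply: eq_bigr => k _; rewrite mxE scalerA.
Qed.

Lemma tsum_tens (W : lmodType K) (F : vect -> vect -> W) u v :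
  (forall u, coord_linear (F u)) -> (forall v, coord_linear (F ^~ v)) ->
  tsum F (tens u v) = F u v.
Proof.
move=> linr linl; rewrite [RHS]linl; apply: eq_bigr => j _.
rewrite [F (bv j) v]linr scaler_sumr; apply: eq_bigr => k _.
by rewrite /tens mxE big_ord1 !mxE scalerA.
Qed.

Lemma sweedler_linear (W : lmodType K) (F : vect -> vect -> W) :
  coord_linear (sw F).
Proof.
move=> x; rewrite /sweedler hcomul_linear tsum_sum.
by apply: eq_bigr => i _; rewrite tsumZ.
Qed.

Lemma sweedler_map (W W' : lmodType K) (L : W -> W') (F : vect -> vect -> W) x :
  {morph L : u v / u + v} -> (forall a w, L (a *: w) = a *: L w) ->
  L (sw F x) = sw (fun u v => L (F u v)) x.
Proof.
move=> LD LZ; have L0 : L 0 = 0 by rewrite -(scale0r 0) LZ scale0r.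
rewrite /sweedler /tsum (big_morph L LD L0); apply: eq_bigr => j _.
by rewrite (big_morph L LD L0); apply: eq_bigr => k _; rewrite LZ.
Qed.

Lemma sweedler_hmull (F : vect -> vect -> vect) x w :
  hmul A (sw F x) w = sw (fun u v => hmul A (F u v) w) x.
Proof.
by apply: (sweedler_map (L := hmul A ^~ w)) => [u v|a u];
  [exact: hmulDl | exact: hmulZl].
Qed.

Lemma sweedler_hmulr (F : vect -> vect -> vect) x w :
  hmul A w (sw F x) = sw (fun u v => hmul A w (F u v)) x.
Proof.
by apply: (sweedler_map (L := hmul A w)) => [u v|a u];
  [exact: hmulDr | exact: hmulZr].
Qed.

Lemma sweedler_hanti (F : vect -> vect -> vect) x :
  hanti A (sw F x) = sw (fun u v => hanti A (F u v)) x.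
Proof. by apply: (sweedler_map (L := hanti A)); [exact: hantiD | exact: hantiZ]. Qed.

Lemma sweedler_scaler (F : vect -> vect -> vect) x a :
  a *: sw F x = sw (fun u v => a *: F u v) x.
Proof.
apply: (sweedler_map (L := fun w : vect => a *: w)); first exact: scalerDr.
by move=> b w; rewrite !scalerA mulrC.
Qed.

Lemma sweedler_sweedler (G F : vect -> vect -> vect) x :
  sw G (sw F x) = sw (fun u v => sw G (F u v)) x.
Proof.
apply: (sweedler_map (L := sw G));
  [exact: (lin_add (sweedler_linear G)) | exact: (lin_scale (sweedler_linear G))].
Qed.

Lemma sweedler_ev (phi : 'cV[K]_n) (F : vect -> vect -> vect) x :
  ev phi (sw F x) = sw (fun u v => ev phi (F u v) : K^o) x.
Proof.
by apply: (sweedler_map (L := ev phi : _ -> K^o)); [exact: evD | exact: evZ].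
Qed.

Lemma sweedler_hcounit (F : vect -> vect -> vect) x :
  hcounit A (sw F x) = sw (fun u v => hcounit A (F u v) : K^o) x.
Proof.
by apply: (sweedler_map (L := hcounit A : _ -> K^o));
  [exact: hcounitD | exact: hcounitZ].
Qed.

Lemma sweedler_scalel (G : vect -> vect -> K^o) x (w : vect) :
  (sw G x : K) *: w = sw (fun u v => G u v *: w) x.
Proof.
apply: (sweedler_map (L := fun t : K^o => t *: w)); first exact: scalerDl.
by move=> a t; rewrite scalerA.
Qed.

Lemma sweedler_exchange (W : lmodType K) (G : vect -> vect -> vect -> vect -> W)
    x y :
  sw (fun u v => sw (G u v) y) x = sw (fun a b => sw (fun u v => G u v a b) x) y.
Proof.
rewrite /sweedler /tsum.
transitivity (\sum_j \sum_k \sum_a \sum_b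
   (hcomul A x j k * hcomul A y a b) *: G (bv j) (bv k) (bv a) (bv b)).
  apply: eq_bigr => j _; apply: eq_bigr => k _; rewrite scaler_sumr.
  by apply: eq_bigr => a _; rewrite scaler_sumr; apply: eq_bigr => b _;
    rewrite scalerA.
under eq_bigr do rewrite exchange_big.
under eq_bigr do under eq_bigr do rewrite exchange_big.
rewrite exchange_big; under eq_bigr do rewrite exchange_big.
apply: eq_bigr => a _; apply: eq_bigr => b _; rewrite scaler_sumr.
apply: eq_bigr => j _; rewrite scaler_sumr.
by apply: eq_bigr => k _; rewrite scalerA mulrC.
Qed.

(* The k-th first leg of x: x_(1) weighted by the k-th coordinate of x_(2),
   so that x_(1) (x) x_(2) = sum_k leg x k (x) e_k. *)
Definition leg (x : vect) (k : 'I_n) : vect := \sum_j hcomul A x j k *: bv j.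

Lemma sweedler_legs (W : lmodType K) (F : vect -> vect -> W) x :
  (forall v, coord_linear (F ^~ v)) -> sw F x = \sum_k F (leg x k) (bv k).
Proof.
move=> linl; rewrite /sweedler /tsum exchange_big; apply: eq_bigr => k _.
by rewrite (lin_sum (linl _)); apply: eq_bigr => j _; rewrite (lin_scale (linl _)).
Qed.

Definition hitl (phi : 'cV[K]_n) (x : vect) : vect :=
  sw (fun u v => ev phi u *: v) x.
Definition hitr (phi : 'cV[K]_n) (x : vect) : vect :=
  sw (fun u v => ev phi v *: u) x.

Lemma contr_l_hitl phi x : contr_l phi (hcomul A x) = hitl phi x.
Proof. by apply: eq_bigr => j _; apply: eq_bigr => k _; rewrite scalerA. Qed.

Lemma contr_r_hitr phi x : contr_r phi (hcomul A x) = hitr phi x.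
Proof. by apply: eq_bigr => j _; apply: eq_bigr => k _; rewrite scalerA. Qed.

(* Both sides are phi(x_(1)) psi(x_(2)). *)
Lemma ev_hitr (phi psi : 'cV[K]_n) x : ev psi (hitr phi x) = ev phi (hitl psi x).
Proof.
rewrite /hitr /hitl !sweedler_ev; apply: (@eq_sweedler K^o) => u v.
by rewrite !evZ mulrC.
Qed.

Definition rtrans (phi : 'cV[K]_n) (y : vect) : 'cV[K]_n :=
  \col_i ev phi (hmul A (bv i) y).

Lemma ev_rtrans phi y z : ev (rtrans phi y) z = ev phi (hmul A z y).
Proof.
apply: (ev_col (f := fun z => ev phi (hmul A z y))).
exact/lin_comp/hmull_linear/ev_linear.
Qed.

End Sweedler.

Section HopfAxioms.
Variables (K : fieldType) (n : nat) (A : hopf_data K n).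
Hypothesis hopfA : is_hopf A.
Local Notation bv := (bvec K).
Local Notation vect := 'rV[K]_n.
Local Notation sw := (sweedler A).

Lemma hmulA x y z : hmul A (hmul A x y) z = hmul A x (hmul A y z).
Proof. by case: hopfA. Qed.

Lemma hmul1 x : hmul A (hu A) x = x.
Proof. by case: hopfA => _ [/(_ x) []]. Qed.

Lemma hmulr1 x : hmul A x (hu A) = x.
Proof. by case: hopfA => _ [/(_ x) []]. Qed.

Lemma sweedler_counitL x : sw (fun u v => hcounit A u *: v) x = x.
Proof.
case: hopfA => _ [_ [_ [/(_ x) [E _] _]]]; rewrite -[RHS]E.
by apply: eq_bigr => j _; apply: eq_bigr => k _; rewrite scalerA.
Qed.

Lemma sweedler_counitR x : sw (fun u v => hcounit A v *: u) x = x.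
Proof.
case: hopfA => _ [_ [_ [/(_ x) [_ E] _]]]; rewrite -[RHS]E.
by apply: eq_bigr => j _; apply: eq_bigr => k _; rewrite scalerA.
Qed.

Lemma sweedler_antipodeL x :
  sw (fun u v => hmul A (hanti A u) v) x = hcounit A x *: hu A.
Proof. by case: hopfA => _ [_ [_ [_ [_ [_ /(_ x) []]]]]]. Qed.

Lemma sweedler_antipodeR x :
  sw (fun u v => hmul A u (hanti A v)) x = hcounit A x *: hu A.
Proof. by case: hopfA => _ [_ [_ [_ [_ [_ /(_ x) []]]]]]. Qed.

(* Both sides are the trilinear extension of G applied to the coefficients
   appearing in the coordinatewise axiom. *)
Lemma sweedler_coassoc (W : lmodType K) (G : vect -> vect -> vect -> W) x :
  sw (fun u v => sw (G u) v) x = sw (fun u v => sw (fun u1 u2 => G u1 u2 v) u) x.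
Proof.
have coassoc i j k := let: conj _ (conj _ (conj c _)) := hopfA in c x i j k.
pose T (c : 'I_n -> 'I_n -> 'I_n -> K) :=
  \sum_i \sum_j \sum_k c i j k *: G (bv i) (bv j) (bv k).
transitivity (T (fun i j k => \sum_b hcomul A x i b * hcomul A (bv b) j k)).
  rewrite /sweedler /tsum; apply: eq_bigr => i _.
  under eq_bigr do rewrite scaler_sumr; rewrite exchange_big.
  apply: eq_bigr => j _; under eq_bigr do rewrite scaler_sumr.
  rewrite exchange_big; apply: eq_bigr => k _; rewrite scaler_suml.
  by apply: eq_bigr => b _; rewrite scalerA.
transitivity (T (fun i j k => \sum_a hcomul A x a k * hcomul A (bv a) i j)).
  by apply: eq_bigr => i _; apply: eq_bigr => j _; apply: eq_bigr => k _;
    rewrite coassoc.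
rewrite /sweedler /tsum.
transitivity (\sum_p \sum_q \sum_i \sum_j
   (hcomul A x p q * hcomul A (bv p) i j) *: G (bv i) (bv j) (bv q)); last first.
  apply: eq_bigr => p _; apply: eq_bigr => q _; rewrite scaler_sumr.
  by apply: eq_bigr => i _; rewrite scaler_sumr; apply: eq_bigr => j _;
    rewrite scalerA.
under [RHS]eq_bigr do rewrite exchange_big.
under [RHS]eq_bigr do under eq_bigr do rewrite exchange_big.
rewrite [RHS]exchange_big; under [RHS]eq_bigr do rewrite exchange_big.
under [RHS]eq_bigr do under eq_bigr do rewrite exchange_big.
apply: eq_bigr => i _; apply: eq_bigr => j _; apply: eq_bigr => k _.
by rewrite scaler_suml.
Qed.

Lemma sweedler_mul (W : lmodType K) (F : vect -> vect -> W) x y :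
  (forall u, coord_linear (F u)) -> (forall v, coord_linear (F ^~ v)) ->
  sw F (hmul A x y) =
  sw (fun a b => sw (fun c d => F (hmul A a c) (hmul A b d)) y) x.
Proof.
move=> linr linl.
have Dmul : hcomul A (hmul A x y) = tmul A (hcomul A x) (hcomul A y).
  by case: hopfA => _ [_ [_ [_ [[D _] _]]]].
rewrite {1}/sweedler Dmul /tmul tsum_sum; apply: eq_bigr => i _.
rewrite tsum_sum; apply: eq_bigr => j _.
rewrite tsum_sum /sweedler [in RHS]/tsum scaler_sumr; apply: eq_bigr => k _.
rewrite tsum_sum scaler_sumr; apply: eq_bigr => l _.
by rewrite tsumZ tsum_tens // scalerA.
Qed.

Lemma hitl_mul (phi : 'cV[K]_n) x y : hitl A phi (hmul A x y) =
  sw (fun a b => sw (fun c d => ev phi (hmul A a c) *: hmul A b d) y) x.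
Proof.
apply: sweedler_mul => [u | v]; first exact: scale_linear.
exact/scale_by_linear/ev_linear.
Qed.

End HopfAxioms.

Section RightIntegral.
Variables (K : fieldType) (n : nat) (A : hopf_data K n) (mu : 'cV[K]_n).
Hypotheses (hopfA : is_hopf A) (mu_int : is_right_integral A mu).
Local Notation vect := 'rV[K]_n.
Local Notation sw := (sweedler A).

Lemma hitl_integral x : hitl A mu x = ev mu x *: hu A.
Proof. by rewrite -contr_l_hitl mu_int. Qed.

(* Expanding mu(x y_(1)) 1 = mu((x y_(1))_(1)) (x y_(1))_(2), the right-hand
   side becomes mu(x_(1) y_(1)) x_(2) y_(2) S(y_(3)) = mu(x_(1) y) x_(2). *)
Lemma integral_swap x y :
  sw (fun u v => ev mu (hmul A u y) *: v) x =
  sw (fun u v => ev mu (hmul A x u) *: hanti A v) y.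
Proof.
symmetry.
under eq_sweedler => u v do
  rewrite -[hanti A v](hmul1 hopfA) -hmulZl -hitl_integral (hitl_mul hopfA)
          sweedler_hmull.
under eq_sweedler => u v do under eq_sweedler => a b do
  rewrite sweedler_hmull.
under eq_sweedler => u v do under eq_sweedler => a b do
  under eq_sweedler => c d do rewrite hmulZl.
rewrite sweedler_exchange; apply: eq_sweedler => a b.
rewrite -(sweedler_coassoc hopfA
  (fun c d v => ev mu (hmul A a c) *: hmul A (hmul A b d) (hanti A v))).
under eq_sweedler => c w do under eq_sweedler => d v do
  rewrite (hmulA hopfA) -hmulZl.
under eq_sweedler => c w do rewrite -sweedler_hmulr (sweedler_antipodeR hopfA).
rewrite -[y in RHS](sweedler_counitR hopfA) sweedler_hmulr sweedler_ev.
rewrite sweedler_scalel; apply: eq_sweedler => c w.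
by rewrite hmulZr (hmulr1 hopfA) hmulZr evZ scalerA.
Qed.

(* If mu(u h) = 0 for all h, the same holds for every first leg of u: the k-th
   coordinate of the left side of integral_swap is mu(leg u k h). *)
Lemma leg_null u : (forall h, ev mu (hmul A u h) = 0) ->
  forall k h, ev mu (hmul A (leg A u k) h) = 0.
Proof.
move=> u_null k h.
have /(congr1 (fun v : vect => v 0 k)) := integral_swap u h.
under eq_sweedler => a b do rewrite -ev_rtrans.
rewrite sweedler_legs => [|v]; last exact/scale_by_linear/ev_linear.
rewrite coord_sum ev_rtrans => ->.
under eq_sweedler => a b do rewrite u_null scale0r.
by rewrite sweedler0 mxE.
Qed.

(* A nonzero right integral is a nondegenerate form: mu(u H) = 0 forces u = 0.
   Indeed eps(u) 1 = u_(1) S(u_(2)) and u = eps(u_(1)) u_(2) are built from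
   the first legs of u, which are again annihilated. *)
Lemma integral_nondegenerate w u : ev mu w != 0 ->
  (forall h, ev mu (hmul A u h) = 0) -> u = 0.
Proof.
move=> mu_w u_null.
have counit_null v : (forall h, ev mu (hmul A v h) = 0) -> hcounit A v = 0.
  move=> v_null; have : ev mu (hmul A (hcounit A v *: hu A) w) = 0.
    rewrite -(sweedler_antipodeR hopfA) sweedler_legs => [|b]; last first.
      exact: hmull_linear.
    rewrite hmul_suml ev_sum big1 // => k _.
    by rewrite (hmulA hopfA) leg_null.
  rewrite hmulZl (hmul1 hopfA) evZ => /eqP.
  by rewrite mulf_eq0 (negbTE mu_w) orbF => /eqP.
rewrite -(sweedler_counitL hopfA u) sweedler_legs => [|b]; last first.
  exact/scale_by_linear/hcounit_linear.
by rewrite big1 // => k _; rewrite counit_null ?scale0r //; apply: leg_null.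
Qed.

(* No nonzero functional phi vanishes on the image of S: the element
   x_(1) phi(x_(2)) is annihilated by mu (by integral_swap), hence is 0, and
   its counit is phi(x). *)
Lemma antipode_image_total w (phi : 'cV[K]_n) : ev mu w != 0 ->
  (forall z, ev phi (hanti A z) = 0) -> phi = 0.
Proof.
move=> mu_w phi_S.
suff phi0 x : ev phi x = 0 by apply/matrixP => i j; rewrite ord1 -ev_bvec phi0 mxE.
have hitr0 : hitr A phi x = 0.
  apply: (integral_nondegenerate mu_w) => h.
  rewrite -ev_rtrans ev_hitr /hitl.
  under eq_sweedler => u v do rewrite ev_rtrans.
  rewrite integral_swap sweedler_ev.
  under (@eq_sweedler _ _ A K^o) => u v do rewrite evZ phi_S mulr0.
  exact: (@sweedler0 _ _ A K^o).
have -> : ev phi x = hcounit A (hitr A phi x).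
  rewrite -{1}(sweedler_counitL hopfA x) /hitr sweedler_ev sweedler_hcounit.
  by apply: (@eq_sweedler _ _ A K^o) => u v; rewrite evZ hcounitZ mulrC.
by rewrite hitr0 -(scale0r 0) hcounitZ mul0r.
Qed.

Lemma antipode_unit w : ev mu w != 0 -> hS A \in unitmx.
Proof.
move=> mu_w; rewrite -unitmx_tr -row_free_unit; apply: inj_row_free => v vS0.
rewrite -[v]trmxK (antipode_image_total mu_w (phi := v^T)) ?trmx0 // => z.
by rewrite /ev /hanti -mulmxA -[hS A]trmxK -trmx_mul vS0 trmx0 mulmx0 mxE.
Qed.

End RightIntegral.

Section Characters.
Variables (K : fieldType) (n : nat) (A : hopf_data K n) (chi : 'cV[K]_n).
Hypothesis hopfA : is_hopf A.
Hypotheses (chi_mul : forall x y, ev chi (hmul A x y) = ev chi x * ev chi y)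
           (chi_one : ev chi (hu A) = 1).
Local Notation bv := (bvec K).
Local Notation sw := (sweedler A).

(* chi o S, the convolution inverse of the character chi. *)
Definition char_inv : 'cV[K]_n := \col_i ev chi (hanti A (bv i)).

Lemma ev_char_inv z : ev char_inv z = ev chi (hanti A z).
Proof.
apply: (ev_col (f := fun z => ev chi (hanti A z))).
exact/lin_comp/hanti_linear/ev_linear.
Qed.

(* chi(S(y_(1))) chi(y_(2)) = chi(S(y_(1)) y_(2)) = eps(y). *)
Lemma char_inv_conv y :
  sw (fun u v => ev char_inv u * ev chi v : K^o) y = hcounit A y.
Proof.
rewrite -[RHS]mulr1 -chi_one -evZ -(sweedler_antipodeL hopfA) sweedler_ev.
by apply: (@eq_sweedler _ _ A K^o) => u v; rewrite chi_mul ev_char_inv.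
Qed.

Lemma hitl_char_mul x y :
  hitl A chi (hmul A x y) = hmul A (hitl A chi x) (hitl A chi y).
Proof.
rewrite (hitl_mul hopfA) [in RHS]/hitl sweedler_hmull; apply: eq_sweedler => a b.
rewrite sweedler_hmulr; apply: eq_sweedler => c d.
by rewrite hmulZl hmulZr scalerA chi_mul.
Qed.

Lemma hitl_char_invK y : hitl A chi (hitl A char_inv y) = y.
Proof.
rewrite /hitl sweedler_sweedler.
under eq_sweedler => u v do
  rewrite (lin_scale (sweedler_linear _ _)) sweedler_scaler.
rewrite (sweedler_coassoc hopfA).
under eq_sweedler => u v do
  (under eq_sweedler => a c do rewrite scalerA; rewrite -sweedler_scalel).
under eq_sweedler => u v do rewrite char_inv_conv.
exact: sweedler_counitL.
Qed.

Lemma ev_char_hitl_inv y : ev chi (hitl A char_inv y) = hcounit A y.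
Proof.
rewrite -char_inv_conv /hitl sweedler_ev.
by apply: (@eq_sweedler _ _ A K^o) => u v; rewrite evZ.
Qed.

End Characters.

Section Cointegral.
Variables (K : fieldType) (n : nat) (A : hopf_data K n).
Variables (mu : 'cV[K]_n) (e : 'rV[K]_n).
Hypotheses (hopfA : is_hopf A) (mu_int : is_right_integral A mu).
Hypotheses (e_coint : is_right_cointegral A e) (mu_e : ev mu e = 1).
Local Notation sw := (sweedler A).
Local Notation alpha := (rtrans A mu e).

Let mu_e_neq0 : ev mu e != 0. Proof. by rewrite mu_e oner_neq0. Qed.

Lemma cointegral_unique c : is_right_cointegral A c -> c = ev mu c *: e.
Proof.
move=> c_coint; apply/eqP; rewrite -subr_eq0; apply/eqP.
apply: (integral_nondegenerate hopfA mu_int mu_e_neq0) => h.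
rewrite -scaleN1r hmulDl !hmulZl c_coint e_coint evD !evZ mu_e.
by rewrite mulr1 mulN1r mulrC addrN.
Qed.

(* x e is again a right cointegral, hence x e = alpha(x) e. *)
Lemma mul_cointegral x : hmul A x e = ev alpha x *: e.
Proof.
rewrite ev_rtrans; apply: cointegral_unique => h.
by rewrite (hmulA hopfA) e_coint hmulZr.
Qed.

Lemma alpha_mul x y : ev alpha (hmul A x y) = ev alpha x * ev alpha y.
Proof.
rewrite !ev_rtrans (hmulA hopfA) [in LHS]mul_cointegral hmulZr evZ.
by rewrite ev_rtrans mulrC.
Qed.

Lemma alpha_one : ev alpha (hu A) = 1.
Proof. by rewrite ev_rtrans (hmul1 hopfA). Qed.

(* The antipode through the integral and the cointegral: S(y) = mu(e_(1) y) e_(2),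
   from integral_swap with x = e. *)
Lemma antipode_formula y : hanti A y = sw (fun u v => ev mu (hmul A u y) *: v) e.
Proof.
rewrite (integral_swap hopfA mu_int) -[y in LHS](sweedler_counitL hopfA).
rewrite sweedler_hanti; apply: eq_sweedler => u v.
by rewrite e_coint evZ mu_e mulr1 hantiZ.
Qed.

Lemma antipode_cointegral : hanti A e = hitl A alpha e.
Proof.
by rewrite antipode_formula; apply: eq_sweedler => u v; rewrite ev_rtrans.
Qed.

(* S(e) is a left cointegral: y S(e) = eps(y) S(e).  Write y as the alpha-hit
   of x, the (alpha o S)-hit of y; then y S(e) is the alpha-hit of
   x e = alpha(x) e, and alpha(x) = eps(y). *)
Lemma antipode_left_cointegral y :
  hmul A y (hanti A e) = hcounit A y *: hanti A e.
Proof.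
rewrite -{1}(hitl_char_invK hopfA alpha_mul alpha_one y) antipode_cointegral.
rewrite -(hitl_char_mul hopfA alpha_mul) mul_cointegral.
rewrite (ev_char_hitl_inv hopfA alpha_mul alpha_one).
exact: (lin_scale (sweedler_linear _ _)).
Qed.

(* Consequently S(S(e)) = mu(e_(1) S(e)) e_(2) = mu(S(e)) e. *)
Lemma antipode2_cointegral : hanti A (hanti A e) = ev mu (hanti A e) *: e.
Proof.
rewrite antipode_formula -[X in _ = _ *: X](sweedler_counitL hopfA e).
rewrite sweedler_scaler; apply: eq_sweedler => u v.
by rewrite antipode_left_cointegral evZ scalerA mulrC.
Qed.

(* Both sides equal alpha(e_(1)) mu(e_(2)). *)
Lemma integral_antipode_cointegral : ev mu (hanti A e) = ev alpha (hitr A mu e).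
Proof. by rewrite antipode_cointegral ev_hitr. Qed.

End Cointegral.

Theorem lemma5p2 (K : fieldType) (n : nat) (A : hopf_data K n)
    (muR : 'cV[K]_n) (eR : 'rV[K]_n) :
  is_hopf A -> is_right_integral A muR -> is_right_cointegral A eR ->
  ev muR eR = 1 ->
  let a : 'rV[K]_n := contr_r muR (hcomul A eR) in
  let alpha : 'cV[K]_n := \col_i ev muR (hmul A (bvec K i) eR) in
  let q : K := ev alpha a in
  let eL : 'rV[K]_n := hantiinv A eR in
  let muL : 'rV[K]_n -> K := fun x => ev muR (hanti A x) in
  hanti A eR = q *: eL /\ muL eR = q.
Proof.
move=> hopfA mu_int e_coint mu_e a alpha q eL muL.
have S_unit : hS A \in unitmx.
  by apply: (antipode_unit hopfA mu_int (w := eR)); rewrite mu_e oner_neq0.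
(* alpha is rtrans A muR eR and a is hitr A muR eR. *)
have muL_q : ev muR (hanti A eR) = q.
  rewrite (integral_antipode_cointegral hopfA mu_int e_coint mu_e).
  by rewrite /q /a contr_r_hitr.
split=> //.
rewrite -[hanti A eR](hantiK S_unit).
rewrite (antipode2_cointegral hopfA mu_int e_coint mu_e) muL_q.
by rewrite /eL /hantiinv scalemxAl.
Qed.
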